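(* Let $F$ be a real quadratic field, let $k_1,k_2$ be integers and let $g:\mathbb{H}^2\to\mathbb{C}$ be a smooth Hilbert modular form of weight $(k_1,k_2)$ for some congruence subgroup of $\operatorname{SL}_2(F)$. Assume that, as a function of the first variable, $g$ is annihilated by $\Delta_{k_1}$ and, as a function of the second variable, $g$ is annihilated by $\Delta_{k_2}$. Then for every non-negative integer $j$, \[ (-4\pi)^jL(\mathcal{C}_j(g))=\binom{k_2+j-1}{j}(R^j_{k_1,1}L_{k_2,2}g)(\tau,\tau)+(-1)^j\binom{k_1+j-1}{j}(L_{k_1,1}R^j_{k_2,2}g)(\tau,\tau). \]
   Context: For $\tau=u+iv$: $R_k=2i\partial_\tau+kv^{-1}$, $L=L_k=-2iv^2\partial_{\bar\tau}$, $R^j_k=R_{k+2j-2}\circ\cdots\circ R_k$, $\Delta_k=-v^2(\partial_u^2+\partial_v^2)+ikv(\partial_u+i\partial_v)$. $R_{k,i}$, $L_{k,i}$ and $R^j_{k,i}$ denote these operators acting in the variable $\tau_i$ of $(\tau_1,\tau_2)\in\mathbb{H}^2$. The $j$-th Cohen operator is $\mathcal{C}_j(g)(\tau)=(2\pi i)^{-j}\sum_{s=0}^j(-1)^s\binom{k_1+j-1}{s}\binom{k_2+j-1}{j-s}\left(\partial_{\tau_1}^{j-s}\partial_{\tau_2}^s g\right)(\tau,\tau)$, a function of $\tau\in\mathbb{H}$. Binomial coefficients $\binom{x}{s}=x(x-1)\cdots(x-s+1)/s!$. *)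

From Stdlib Require Import Reals ZArith List.
From Coquelicot Require Import Coquelicot.
Open Scope R_scope.

Definition Czpow (z : C) (k : Z) : C :=
  match k with
  | Z0 => RtoC 1
  | Zpos p => Cpow z (Pos.to_nat p)
  | Zneg p => Cinv (Cpow z (Pos.to_nat p))
  end.

Fixpoint falling (x : R) (s : nat) : R :=
  match s with
  | O => 1
  | S s' => falling x s' * (x - INR s')
  end.
Definition gbinom (x : R) (s : nat) : R := falling x s / INR (fact s).

(* Derivative of a complex-valued function of one real variable, taken
   componentwise (total operator, correct whenever the function is differentiable). *)
Definition dC (h : R -> C) (x : R) : C :=
  (Derive (fun t => Re (h t)) x, Derive (fun t => Im (h t)) x).
Definition ex_dC (h : R -> C) (x : R) : Prop :=
  ex_derive (fun t => Re (h t)) x /\ ex_derive (fun t => Im (h t)) x.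

Definition inH (t : C) : Prop := 0 < Im t.

Definition du (h : C -> C) : C -> C := fun t => dC (fun x => h (x, Im t)) (Re t).
Definition dv (h : C -> C) : C -> C := fun t => dC (fun y => h (Re t, y)) (Im t).
Definition dtau (h : C -> C) : C -> C :=
  fun t => (RtoC (/2) * (du h t - Ci * dv h t))%C.
Definition dtaubar (h : C -> C) : C -> C :=
  fun t => (RtoC (/2) * (du h t + Ci * dv h t))%C.
Definition Lop (h : C -> C) : C -> C :=
  fun t => (RtoC (-2) * Ci * RtoC (Im t ^ 2) * dtaubar h t)%C.

Inductive dir := U1 | V1 | U2 | V2.

Definition line (d : dir) (f : C -> C -> C) (a b : C) : R -> C :=
  match d with
  | U1 => fun x => f (x, Im a) b
  | V1 => fun y => f (Re a, y) b
  | U2 => fun x => f a (x, Im b)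
  | V2 => fun y => f a (Re b, y)
  end.
Definition coord (d : dir) (a b : C) : R :=
  match d with U1 => Re a | V1 => Im a | U2 => Re b | V2 => Im b end.
Definition pd (d : dir) (f : C -> C -> C) : C -> C -> C :=
  fun a b => dC (line d f a b) (coord d a b).
Definition iterD (ds : list dir) (f : C -> C -> C) : C -> C -> C :=
  fold_right pd f ds.

Definition inH2 (a b : C) : Prop := inH a /\ inH b.

Definition smooth_H2 (f : C -> C -> C) : Prop :=
  forall (ds : list dir) (a b : C), inH2 a b ->
    continuous (fun p : C * C => iterD ds f (fst p) (snd p)) (a, b) /\
    forall d : dir, ex_dC (line d (iterD ds f) a b) (coord d a b).

Definition dtau1 (f : C -> C -> C) : C -> C -> C :=
  fun a b => (RtoC (/2) * (pd U1 f a b - Ci * pd V1 f a b))%C.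
Definition dtaubar1 (f : C -> C -> C) : C -> C -> C :=
  fun a b => (RtoC (/2) * (pd U1 f a b + Ci * pd V1 f a b))%C.
Definition dtau2 (f : C -> C -> C) : C -> C -> C :=
  fun a b => (RtoC (/2) * (pd U2 f a b - Ci * pd V2 f a b))%C.
Definition dtaubar2 (f : C -> C -> C) : C -> C -> C :=
  fun a b => (RtoC (/2) * (pd U2 f a b + Ci * pd V2 f a b))%C.

Definition R1 (k : Z) (f : C -> C -> C) : C -> C -> C :=
  fun a b => (RtoC 2 * Ci * dtau1 f a b + RtoC (IZR k / Im a) * f a b)%C.
Definition R2 (k : Z) (f : C -> C -> C) : C -> C -> C :=
  fun a b => (RtoC 2 * Ci * dtau2 f a b + RtoC (IZR k / Im b) * f a b)%C.
Definition L1 (f : C -> C -> C) : C -> C -> C :=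
  fun a b => (RtoC (-2) * Ci * RtoC (Im a ^ 2) * dtaubar1 f a b)%C.
Definition L2 (f : C -> C -> C) : C -> C -> C :=
  fun a b => (RtoC (-2) * Ci * RtoC (Im b ^ 2) * dtaubar2 f a b)%C.

Fixpoint Rit1 (k : Z) (j : nat) (f : C -> C -> C) : C -> C -> C :=
  match j with
  | O => f
  | S j' => R1 (k + 2 * Z.of_nat j') (Rit1 k j' f)
  end.
Fixpoint Rit2 (k : Z) (j : nat) (f : C -> C -> C) : C -> C -> C :=
  match j with
  | O => f
  | S j' => R2 (k + 2 * Z.of_nat j') (Rit2 k j' f)
  end.

Definition Delta1 (k : Z) (f : C -> C -> C) : C -> C -> C :=
  fun a b =>
    (RtoC (- Im a ^ 2) * (pd U1 (pd U1 f) a b + pd V1 (pd V1 f) a b)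
     + Ci * RtoC (IZR k * Im a) * (pd U1 f a b + Ci * pd V1 f a b))%C.
Definition Delta2 (k : Z) (f : C -> C -> C) : C -> C -> C :=
  fun a b =>
    (RtoC (- Im b ^ 2) * (pd U2 (pd U2 f) a b + pd V2 (pd V2 f) a b)
     + Ci * RtoC (IZR k * Im b) * (pd U2 f a b + Ci * pd V2 f a b))%C.

Fixpoint dtau2n (n : nat) (f : C -> C -> C) : C -> C -> C :=
  match n with O => f | S n' => dtau2 (dtau2n n' f) end.
Fixpoint dtau1n (m : nat) (f : C -> C -> C) : C -> C -> C :=
  match m with O => f | S m' => dtau1 (dtau1n m' f) end.

Definition Cohen (k1 k2 : Z) (j : nat) (g : C -> C -> C) : C -> C :=
  fun t =>
    (Cinv (Cpow (RtoC (2 * PI) * Ci) j) *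
     fold_right Cplus (RtoC 0)
       (map (fun s : nat =>
          RtoC ((-1) ^ s * gbinom (IZR k1 + INR j - 1) s
                         * gbinom (IZR k2 + INR j - 1) (j - s))
          * dtau1n (j - s) (dtau2n s g) t t)
          (seq 0 (S j))))%C.

(* D squarefree, D > 1; every real quadratic field is of this form. *)
Definition squarefreeZ (D : Z) : Prop :=
  forall m : Z, (m * m | D)%Z -> (m * m = 1)%Z.

(* Z-basis {1, omega} of the ring of integers O_F, in the two real embeddings *)
Definition omega1 (D : Z) : R :=
  if Z.eqb (Z.modulo D 4) 1 then (1 + sqrt (IZR D)) / 2 else sqrt (IZR D).
Definition omega2 (D : Z) : R :=
  if Z.eqb (Z.modulo D 4) 1 then (1 - sqrt (IZR D)) / 2 else - sqrt (IZR D).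

(* an element a + b*omega of O_F is represented by (a,b) : Z * Z *)
Definition OF := (Z * Z)%type.
Definition emb1 (D : Z) (x : OF) : R := IZR (fst x) + IZR (snd x) * omega1 D.
Definition emb2 (D : Z) (x : OF) : R := IZR (fst x) + IZR (snd x) * omega2 D.

Definition congOF (N : Z) (x : OF) (e : Z) : Prop :=
  (N | fst x - e)%Z /\ (N | snd x)%Z.

Definition inGammaN (D N : Z) (a b c d : OF) : Prop :=
  emb1 D a * emb1 D d - emb1 D b * emb1 D c = 1 /\
  emb2 D a * emb2 D d - emb2 D b * emb2 D c = 1 /\
  congOF N a 1 /\ congOF N b 0 /\ congOF N c 0 /\ congOF N d 1.

Definition mobius (a b c d : R) (t : C) : C :=
  ((RtoC a * t + RtoC b) / (RtoC c * t + RtoC d))%C.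

Definition modular_GammaN (D N k1 k2 : Z) (g : C -> C -> C) : Prop :=
  forall a b c d : OF, inGammaN D N a b c d ->
  forall t1 t2 : C, inH2 t1 t2 ->
    g (mobius (emb1 D a) (emb1 D b) (emb1 D c) (emb1 D d) t1)
      (mobius (emb2 D a) (emb2 D b) (emb2 D c) (emb2 D d) t2)
    = (Czpow (RtoC (emb1 D c) * t1 + RtoC (emb1 D d)) k1
       * Czpow (RtoC (emb2 D c) * t2 + RtoC (emb2 D d)) k2
       * g t1 t2)%C.

(* smooth Hilbert modular form of weight (k1,k2) for some congruence subgroup
   (every congruence subgroup contains some Gamma(N), N a positive integer) *)
Definition smooth_HMF (D k1 k2 : Z) (g : C -> C -> C) : Prop :=
  smooth_H2 g /\ exists N : Z, (0 < N)%Z /\ modular_GammaN D N k1 k2 g.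

From Pilot Require Import Defs.
From Stdlib Require Import Reals ZArith List Lia Lra Psatz FunctionalExtensionality.
From Coquelicot Require Import Coquelicot.
Open Scope R_scope.

(** Write [G] for the Cohen kernel, the function of [(tau1, tau2)] whose restriction
    to the diagonal is [C_j(g)].  By the chain rule, [L] applied to that restriction
    is [(L_1 + L_2) G] on the diagonal.  Harmonicity [Delta_k g = 0] says
    [d_tau d_taubar g = (i k / 2 v) d_taubar g], hence
    [d_tau^m d_taubar g = (k)_m (i / 2 v)^m d_taubar g] with [(k)_m] the rising factorial.
    Commuting [d_taubar2] through the holomorphic derivatives of [G] (Schwarz) and using
    this in the second variable writes [L_2 G] as a combination of
    [v2^-s d_tau1^(j-s) L_2 g].  On the other hand
    [R^j_k = sum_r (2i)^r binom(j,r) (k+r)_(j-r) v^(r-j) d_tau^r], so on the diagonal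
    [v1 = v2] the two combinations agree up to [binom(k2+j-1, j)] by a binomial identity.
    The [L_1] term follows by exchanging the variables: the kernel for [(k1, k2, g)] is
    [(-1)^j] times the swapped kernel for [(k2, k1, g(tau2, tau1))], and [L_2] commutes
    with [R^j_1]. *)

(** Coquelicot's lemmas on [sum_n] restated at type [C], so that [ring] applies to their
    results. *)

Lemma sum_n_Cext (F G : nat -> C) n : (forall r, (r <= n)%nat -> F r = G r :> C) ->
  sum_n F n = sum_n G n :> C.
Proof. apply sum_n_ext_loc. Qed.

Lemma sum_n_Cplus (F G : nat -> C) n :
  sum_n (fun r => F r + G r)%C n = (sum_n F n + sum_n G n)%C :> C.
Proof. exact (sum_n_plus F G n). Qed.

Lemma sum_n_Cmult_l (c : C) (F : nat -> C) n :
  sum_n (fun r => c * F r)%C n = (c * sum_n F n)%C :> C.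
Proof. exact (sum_n_mult_l c F n). Qed.

Lemma sum_n_CSn (F : nat -> C) n : sum_n F (S n) = (sum_n F n + F (S n))%C :> C.
Proof. exact (sum_Sn F n). Qed.

Lemma sum_n_Sn_l (F : nat -> C) n : sum_n F (S n) = (F 0%nat + sum_n (fun r => F (S r)) n)%C :> C.
Proof.
  induction n as [|n IH]; [now rewrite sum_n_CSn, !sum_O |].
  rewrite sum_n_CSn, IH, (sum_n_CSn (fun r => F (S r))); ring.
Qed.

Lemma sum_n_rev (F : nat -> C) n : sum_n F n = sum_n (fun r => F (n - r)%nat) n :> C.
Proof.
  induction n as [|n IH]; [now rewrite !sum_O |].
  rewrite sum_n_CSn, IH, sum_n_Sn_l, Nat.sub_0_r; simpl; ring.
Qed.

Definition is_dC (h : R -> C) (x : R) (l : C) : Prop :=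
  is_derive (fun t => Re (h t)) x (Re l) /\ is_derive (fun t => Im (h t)) x (Im l).

Lemma is_dC_unique h x l : is_dC h x l -> dC h x = l.
Proof.
  intros [H1 H2]; destruct l as [l1 l2]; unfold dC.
  f_equal; now apply is_derive_unique.
Qed.

Lemma dC_correct h x : ex_dC h x -> is_dC h x (dC h x).
Proof. intros [H1 H2]; split; now apply Derive_correct. Qed.

Lemma is_dC_ex_dC h x l : is_dC h x l -> ex_dC h x.
Proof. intros [H1 H2]; split; eexists; eassumption. Qed.

Lemma is_dC_const (c : C) x : is_dC (fun _ => c) x 0.
Proof. split; exact (is_derive_const _ _). Qed.

Lemma is_dC_RtoC (f : R -> R) x l : is_derive f x l -> is_dC (fun t => RtoC (f t)) x (RtoC l).
Proof. intros H; split; [exact H | exact (is_derive_const _ _)]. Qed.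

Lemma is_dC_plus f g x l1 l2 : is_dC f x l1 -> is_dC g x l2 ->
  is_dC (fun t => f t + g t)%C x (l1 + l2)%C.
Proof.
  intros [H1 H2] [H3 H4]; split.
  - exact (is_derive_plus _ _ _ _ _ H1 H3).
  - exact (is_derive_plus _ _ _ _ _ H2 H4).
Qed.

Lemma is_dC_mult f g x l1 l2 : is_dC f x l1 -> is_dC g x l2 ->
  is_dC (fun t => f t * g t)%C x (l1 * g x + f x * l2)%C.
Proof.
  intros [H1 H2] [H3 H4].
  assert (Hmult : forall (u v : R -> R) du dv, is_derive u x du -> is_derive v x dv ->
    is_derive (fun t => u t * v t) x (du * v x + u x * dv)).
  { intros; apply (is_derive_mult u v); auto; apply Rmult_comm. }
  split.
  - apply (is_derive_ext (fun t => Re (f t) * Re (g t) - Im (f t) * Im (g t))); [reflexivity|].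
    replace (Re (l1 * g x + f x * l2)%C) with
      ((Re l1 * Re (g x) + Re (f x) * Re l2) - (Im l1 * Im (g x) + Im (f x) * Im l2))
      by (destruct l1, l2, (f x), (g x); simpl; ring).
    apply (is_derive_minus (fun t => Re (f t) * Re (g t)) (fun t => Im (f t) * Im (g t)));
      apply Hmult; auto.
  - apply (is_derive_ext (fun t => Re (f t) * Im (g t) + Im (f t) * Re (g t))); [reflexivity|].
    replace (Im (l1 * g x + f x * l2)%C) with
      ((Re l1 * Im (g x) + Re (f x) * Im l2) + (Im l1 * Re (g x) + Im (f x) * Re l2))
      by (destruct l1, l2, (f x), (g x); simpl; ring).
    apply (is_derive_plus (fun t => Re (f t) * Im (g t)) (fun t => Im (f t) * Re (g t)));
      apply Hmult; auto.
Qed.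

Lemma is_dC_ext_loc (h1 h2 : R -> C) x l :
  locally x (fun y => h1 y = h2 y) -> is_dC h1 x l -> is_dC h2 x l.
Proof.
  intros Hloc [H1 H2]; split; (eapply is_derive_ext_loc; [|eassumption]);
    apply (filter_imp _ _ (fun y (E : h1 y = h2 y) => f_equal _ E) Hloc).
Qed.

Lemma dC_ext_loc (h1 h2 : R -> C) x :
  locally x (fun y => h1 y = h2 y) -> dC h1 x = dC h2 x.
Proof.
  intros Hloc; unfold dC; f_equal; apply Derive_ext_loc;
    apply (filter_imp _ _ (fun y (E : h1 y = h2 y) => f_equal _ E) Hloc).
Qed.

Definition is_pd (d : dir) (f : C -> C -> C) (a b : C) (l : C) : Prop :=
  is_dC (line d f a b) (coord d a b) l.
Definition ex_pd (d : dir) (f : C -> C -> C) (a b : C) : Prop :=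
  ex_dC (line d f a b) (coord d a b).

Lemma is_pd_unique d f a b l : is_pd d f a b l -> pd d f a b = l.
Proof. apply is_dC_unique. Qed.

Lemma pd_correct d f a b : ex_pd d f a b -> is_pd d f a b (pd d f a b).
Proof. apply dC_correct. Qed.

Lemma is_pd_ex_pd d f a b l : is_pd d f a b l -> ex_pd d f a b.
Proof. apply is_dC_ex_dC. Qed.

Lemma line_coord d f a b : line d f a b (coord d a b) = f a b.
Proof. destruct a, b, d; reflexivity. Qed.

Lemma is_pd_ext d f g a b l : (forall a b, f a b = g a b) -> is_pd d f a b l -> is_pd d g a b l.
Proof.
  intros E; replace g with f; [easy|].
  apply functional_extensionality; intro; apply functional_extensionality; intro; apply E.
Qed.

Lemma is_pd_plus d f g a b l1 l2 : is_pd d f a b l1 -> is_pd d g a b l2 ->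
  is_pd d (fun a b => f a b + g a b)%C a b (l1 + l2)%C.
Proof. intros H1 H2; destruct d; exact (is_dC_plus _ _ _ _ _ H1 H2). Qed.

Lemma is_pd_mult d f g a b l1 l2 : is_pd d f a b l1 -> is_pd d g a b l2 ->
  is_pd d (fun a b => f a b * g a b)%C a b (l1 * g a b + f a b * l2)%C.
Proof.
  intros H1 H2; rewrite <- (line_coord d f a b), <- (line_coord d g a b).
  destruct d; exact (is_dC_mult _ _ _ _ _ H1 H2).
Qed.

Lemma is_pd_const_along d c a b : (forall x, line d c a b x = c a b) -> is_pd d c a b 0.
Proof.
  intros Hc; unfold is_pd; replace (line d c a b) with (fun _ : R => c a b).
  - apply is_dC_const.
  - apply functional_extensionality; intro; now rewrite Hc.
Qed.

Lemma is_pd_const d c a b : is_pd d (fun _ _ => c) a b 0.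
Proof. apply is_pd_const_along; destruct d; reflexivity. Qed.

Lemma is_pd_mul_const_along d c h a b l : (forall x, line d c a b x = c a b) ->
  is_pd d h a b l -> is_pd d (fun a b => c a b * h a b)%C a b (c a b * l)%C.
Proof.
  intros Hc H; replace (c a b * l)%C with (0 * h a b + c a b * l)%C by ring.
  exact (is_pd_mult d c h a b _ _ (is_pd_const_along d c a b Hc) H).
Qed.

Lemma is_pd_scal d (c : C) f a b l : is_pd d f a b l ->
  is_pd d (fun a b => c * f a b)%C a b (c * l)%C.
Proof. apply (is_pd_mul_const_along d (fun _ _ => c)); now destruct d. Qed.

Lemma is_pd_sum_n d F L n a b : (forall r, (r <= n)%nat -> is_pd d (F r) a b (L r)) ->
  is_pd d (fun a b => sum_n (fun r => F r a b) n) a b (sum_n L n).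
Proof.
  induction n as [|n IH]; intros H.
  - rewrite sum_O; apply (is_pd_ext d (F 0%nat)); [intros; now rewrite sum_O | auto].
  - rewrite sum_Sn.
    apply (is_pd_ext d (fun a b => sum_n (fun r => F r a b) n + F (S n) a b)%C).
    + intros; now rewrite sum_Sn.
    + apply is_pd_plus; [apply IH; auto | apply H; lia].
Qed.

Lemma pd_plus d f g a b : ex_pd d f a b -> ex_pd d g a b ->
  pd d (fun a b => f a b + g a b)%C a b = (pd d f a b + pd d g a b)%C.
Proof. intros; apply is_pd_unique, is_pd_plus; now apply pd_correct. Qed.

Lemma ex_pd_plus d f g a b : ex_pd d f a b -> ex_pd d g a b ->
  ex_pd d (fun a b => f a b + g a b)%C a b.
Proof. intros; eapply is_pd_ex_pd, is_pd_plus; now apply pd_correct. Qed.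

Lemma pd_mult d f g a b : ex_pd d f a b -> ex_pd d g a b ->
  pd d (fun a b => f a b * g a b)%C a b = (pd d f a b * g a b + f a b * pd d g a b)%C.
Proof. intros; apply is_pd_unique, is_pd_mult; now apply pd_correct. Qed.

Lemma ex_pd_mult d f g a b : ex_pd d f a b -> ex_pd d g a b ->
  ex_pd d (fun a b => f a b * g a b)%C a b.
Proof. intros; eapply is_pd_ex_pd, is_pd_mult; now apply pd_correct. Qed.

Lemma pd_const d c a b : pd d (fun _ _ => c) a b = 0.
Proof. apply is_pd_unique, is_pd_const. Qed.

Lemma ex_pd_const d c a b : ex_pd d (fun _ _ => c) a b.
Proof. eapply is_pd_ex_pd, is_pd_const. Qed.

Lemma pd_scal d (c : C) f a b : ex_pd d f a b ->
  pd d (fun a b => c * f a b)%C a b = (c * pd d f a b)%C.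
Proof. intros; apply is_pd_unique, is_pd_scal; now apply pd_correct. Qed.

Lemma ex_pd_scal d (c : C) f a b : ex_pd d f a b -> ex_pd d (fun a b => c * f a b)%C a b.
Proof. intros; eapply is_pd_ex_pd, is_pd_scal; now apply pd_correct. Qed.

Lemma pd_mul_const_along d c h a b : (forall x, line d c a b x = c a b) -> ex_pd d h a b ->
  pd d (fun a b => c a b * h a b)%C a b = (c a b * pd d h a b)%C.
Proof. intros; apply is_pd_unique, is_pd_mul_const_along; auto; now apply pd_correct. Qed.

Lemma ex_pd_mul_const_along d c h a b : (forall x, line d c a b x = c a b) -> ex_pd d h a b ->
  ex_pd d (fun a b => c a b * h a b)%C a b.
Proof. intros; eapply is_pd_ex_pd, is_pd_mul_const_along; auto; now apply pd_correct. Qed.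

Lemma pd_sum_n d F n a b : (forall r, (r <= n)%nat -> ex_pd d (F r) a b) ->
  pd d (fun a b => sum_n (fun r => F r a b) n) a b = sum_n (fun r => pd d (F r) a b) n.
Proof. intros; apply is_pd_unique, is_pd_sum_n; intros; apply pd_correct; auto. Qed.

Lemma ex_pd_sum_n d F n a b : (forall r, (r <= n)%nat -> ex_pd d (F r) a b) ->
  ex_pd d (fun a b => sum_n (fun r => F r a b) n) a b.
Proof. intros; eapply is_pd_ex_pd, is_pd_sum_n; intros; apply pd_correct; auto. Qed.

Definition eqH2 (f g : C -> C -> C) : Prop := forall a b, inH2 a b -> f a b = g a b.

Lemma eqH2_refl f : eqH2 f f.
Proof. now intros a b _. Qed.

Lemma eqH2_sym f g : eqH2 f g -> eqH2 g f.
Proof. intros E a b H; symmetry; auto. Qed.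

Lemma eqH2_trans f g h : eqH2 f g -> eqH2 g h -> eqH2 f h.
Proof. intros E1 E2 a b H; rewrite E1; auto. Qed.

Lemma line_eqH2 d f g a b : eqH2 f g -> inH2 a b ->
  locally (coord d a b) (fun x => line d f a b x = line d g a b x).
Proof.
  intros E [Ha Hb]; destruct d; simpl.
  - apply filter_forall; intros x; apply E; split; assumption.
  - apply (filter_imp (fun y => 0 < y)); [intros y Hy; apply E; split; assumption |].
    now apply open_gt.
  - apply filter_forall; intros x; apply E; split; assumption.
  - apply (filter_imp (fun y => 0 < y)); [intros y Hy; apply E; split; assumption |].
    now apply open_gt.
Qed.

Lemma pd_eqH2 d f g : eqH2 f g -> eqH2 (pd d f) (pd d g).
Proof. intros E a b H; apply dC_ext_loc, line_eqH2; auto. Qed.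

Lemma ex_pd_eqH2 d f g a b : eqH2 f g -> inH2 a b -> ex_pd d f a b -> ex_pd d g a b.
Proof.
  intros E H Hf; eapply is_dC_ex_dC, is_dC_ext_loc, dC_correct, Hf.
  now apply line_eqH2.
Qed.

Definition continuous_coords (F : C -> C -> C) (a b : C) : Prop :=
  forall eps : posreal, exists delta : posreal, forall a' b' : C,
    Rabs (Re a' - Re a) < delta -> Rabs (Im a' - Im a) < delta ->
    Rabs (Re b' - Re b) < delta -> Rabs (Im b' - Im b) < delta ->
    Cmod (F a' b' - F a b) < eps.

Lemma Cmod_le_abs_Re_Im (z : C) : Cmod z <= Rabs (Re z) + Rabs (Im z).
Proof.
  pose proof (Rabs_pos (Re z)); pose proof (Rabs_pos (Im z)).
  apply Rsqr_incr_0_var; [| lra].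
  unfold Cmod; rewrite Rsqr_sqrt by nra.
  destruct z as [x y]; simpl in *.
  pose proof (Rsqr_abs x); pose proof (Rsqr_abs y); unfold Rsqr in *; nra.
Qed.

Lemma continuous_coords_of_continuous F a b :
  continuous (fun p : C * C => F (fst p) (snd p)) (a, b) -> continuous_coords F a b.
Proof.
  intros H eps.
  assert (He : 0 < eps / 2) by (destruct eps; simpl; lra).
  destruct (proj1 (filterlim_locally _ _) H (mkposreal _ He)) as [delta Hd].
  exists delta; intros a' b' h1 h2 h3 h4.
  destruct (Hd (a', b') (conj (conj h1 h2) (conj h3 h4))) as [Hr Hi].
  eapply Rle_lt_trans; [apply Cmod_le_abs_Re_Im |].
  change (Rabs (Re (F a' b') - Re (F a b)) < eps / 2) in Hr.
  change (Rabs (Im (F a' b') - Im (F a b)) < eps / 2) in Hi.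
  destruct (F a' b'), (F a b); simpl in *; unfold Rminus in *; lra.
Qed.

Lemma continuous_coords_eqH2 F G a b : eqH2 F G -> inH2 a b ->
  continuous_coords F a b -> continuous_coords G a b.
Proof.
  intros E [Ha Hb] H eps; destruct (H eps) as [delta Hd]; unfold inH in *.
  assert (Hm : 0 < Rmin delta (Rmin (Im a) (Im b)))
    by (repeat apply Rmin_pos; auto; apply cond_pos).
  pose proof (Rmin_l delta (Rmin (Im a) (Im b))); pose proof (Rmin_r delta (Rmin (Im a) (Im b))).
  pose proof (Rmin_l (Im a) (Im b)); pose proof (Rmin_r (Im a) (Im b)).
  exists (mkposreal _ Hm); simpl; intros a' b' h1 h2 h3 h4.
  pose proof (Rabs_def2 _ _ h2); pose proof (Rabs_def2 _ _ h4).
  rewrite <- !E by (split; unfold inH; lra).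
  apply Hd; lra.
Qed.

Lemma continuous_coords_lin (c : C) F G a b :
  continuous_coords F a b -> continuous_coords G a b ->
  continuous_coords (fun a b => c * F a b + G a b)%C a b.
Proof.
  intros HF HG eps.
  pose proof (Cmod_ge_0 c) as Hc; pose proof (cond_pos eps) as He.
  assert (H1 : 0 < eps / (2 * (1 + Cmod c))) by (apply Rdiv_lt_0_compat; lra).
  destruct (HF (mkposreal _ H1)) as [d1 Hd1]; destruct (HG (pos_div_2 eps)) as [d2 Hd2].
  exists (mkposreal _ (Rmin_pos _ _ (cond_pos d1) (cond_pos d2))); simpl.
  intros a' b' h1 h2 h3 h4; pose proof (Rmin_l d1 d2); pose proof (Rmin_r d1 d2).
  specialize (Hd1 a' b' ltac:(lra) ltac:(lra) ltac:(lra) ltac:(lra)).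
  specialize (Hd2 a' b' ltac:(lra) ltac:(lra) ltac:(lra) ltac:(lra)); simpl in Hd1, Hd2.
  replace (c * F a' b' + G a' b' - (c * F a b + G a b))%C
    with (c * (F a' b' - F a b) + (G a' b' - G a b))%C by ring.
  eapply Rle_lt_trans; [apply Cmod_triangle |]; rewrite Cmod_mult.
  assert (Cmod c * Cmod (F a' b' - F a b) <= Cmod c * (eps / (2 * (1 + Cmod c))))
    by (apply Rmult_le_compat_l; lra).
  replace (Cmod c * (eps / (2 * (1 + Cmod c)))) with (eps / 2 - eps / (2 * (1 + Cmod c)))
    in * by (field; lra).
  lra.
Qed.

Lemma continuous_coords_const c a b : continuous_coords (fun _ _ => c) a b.
Proof.
  intros eps; exists eps; intros.
  replace (c - c)%C with (RtoC 0) by ring; rewrite Cmod_0; apply cond_pos.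
Qed.

(** [smooth_H2], with continuity read off in the four real coordinates: the form consumed
    by the two-variable lemmas of Coquelicot ([Schwarz], [is_derive_filterdiff]). *)
Definition smooth (f : C -> C -> C) : Prop :=
  forall ds a b, inH2 a b ->
    continuous_coords (iterD ds f) a b /\ forall d, ex_pd d (iterD ds f) a b.

Lemma smooth_of_smooth_H2 f : smooth_H2 f -> smooth f.
Proof.
  intros H ds a b Hab; destruct (H ds a b Hab) as [H1 H2].
  split; [now apply continuous_coords_of_continuous | exact H2].
Qed.

Lemma smooth_ex_pd f d a b : smooth f -> inH2 a b -> ex_pd d f a b.
Proof. intros H Hab; exact (proj2 (H nil a b Hab) d). Qed.

Lemma smooth_continuous_coords f a b : smooth f -> inH2 a b -> continuous_coords f a b.
Proof. intros H Hab; exact (proj1 (H nil a b Hab)). Qed.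

Lemma smooth_pd d f : smooth f -> smooth (pd d f).
Proof.
  intros H ds; replace (iterD ds (pd d f)) with (iterD (ds ++ d :: nil) f); [apply H |].
  unfold iterD; now rewrite fold_right_app.
Qed.

Lemma iterD_eqH2 ds f g : eqH2 f g -> eqH2 (iterD ds f) (iterD ds g).
Proof. induction ds; simpl; intros E; [exact E | apply pd_eqH2; auto]. Qed.

Lemma smooth_eqH2 f g : smooth f -> eqH2 f g -> smooth g.
Proof.
  intros H E ds a b Hab; pose proof (iterD_eqH2 ds _ _ E) as E'; split.
  - eapply continuous_coords_eqH2; eauto; apply H; auto.
  - intros d; eapply ex_pd_eqH2; eauto; apply H; auto.
Qed.

Lemma iterD_lin (c : C) F G ds : smooth F -> smooth G ->
  eqH2 (iterD ds (fun a b => c * F a b + G a b)%C)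
       (fun a b => c * iterD ds F a b + iterD ds G a b)%C.
Proof.
  intros HF HG; induction ds as [|d ds IH]; simpl; [apply eqH2_refl |].
  eapply eqH2_trans; [apply pd_eqH2, IH |]; intros a b Hab.
  pose proof (proj2 (HF ds a b Hab) d); pose proof (proj2 (HG ds a b Hab) d).
  rewrite pd_plus, pd_scal; auto using ex_pd_scal.
Qed.

Lemma smooth_lin (c : C) F G : smooth F -> smooth G -> smooth (fun a b => c * F a b + G a b)%C.
Proof.
  intros HF HG ds a b Hab; pose proof (eqH2_sym _ _ (iterD_lin c F G ds HF HG)) as E.
  destruct (HF ds a b Hab) as [CF EF]; destruct (HG ds a b Hab) as [CG EG]; split.
  - eapply continuous_coords_eqH2; eauto; now apply continuous_coords_lin.
  - intros d; eapply ex_pd_eqH2; eauto; apply ex_pd_plus; auto using ex_pd_scal.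
Qed.

Lemma iterD_const_cons c d ds : iterD (d :: ds) (fun _ _ => c) = (fun _ _ => 0).
Proof.
  revert d; induction ds as [|e ds IH]; intros d; simpl in *; [| rewrite IH];
    apply functional_extensionality; intro; apply functional_extensionality; intro;
    apply pd_const.
Qed.

Lemma smooth_const c : smooth (fun _ _ => c).
Proof.
  intros [|d ds] a b Hab; [| rewrite iterD_const_cons];
    split; try apply continuous_coords_const; intros; apply ex_pd_const.
Qed.

Lemma smooth_ext f g : smooth f -> (forall a b, f a b = g a b) -> smooth g.
Proof. intros H E; apply (smooth_eqH2 f); auto; intros a b _; apply E. Qed.

Lemma smooth_plus F G : smooth F -> smooth G -> smooth (fun a b => F a b + G a b)%C.
Proof. intros; eapply smooth_ext; [apply (smooth_lin 1 F G); auto | intros; simpl; ring]. Qed.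

Lemma smooth_scal (c : C) F : smooth F -> smooth (fun a b => c * F a b)%C.
Proof.
  intros; eapply smooth_ext; [apply (smooth_lin c F (fun _ _ => 0)); auto using smooth_const |].
  intros; simpl; ring.
Qed.

Lemma smooth_sum_n F n : (forall r, (r <= n)%nat -> smooth (F r)) ->
  smooth (fun a b => sum_n (fun r => F r a b) n).
Proof.
  induction n as [|n IH]; intros H.
  - apply (smooth_ext (F 0%nat)); [apply H; lia | intros; now rewrite sum_O].
  - apply (smooth_ext (fun a b => sum_n (fun r => F r a b) n + F (S n) a b)%C).
    + apply smooth_plus; [apply IH; auto | apply H; lia].
    + intros; now rewrite sum_Sn.
Qed.

(** * Symmetry of mixed partials and the chain rule on the diagonal *)

Definition move (d : dir) (P : C * C) (x : R) : C * C :=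
  match d with
  | U1 => ((x, Im (fst P)), snd P)
  | V1 => ((Re (fst P), x), snd P)
  | U2 => (fst P, (x, Im (snd P)))
  | V2 => (fst P, (Re (snd P), x))
  end.

Definition coordp (d : dir) (P : C * C) : R := coord d (fst P) (snd P).

Lemma line_move d f P : line d f (fst P) (snd P) = fun x => f (fst (move d P x)) (snd (move d P x)).
Proof. destruct d; reflexivity. Qed.

Lemma coordp_move d P x : coordp d (move d P x) = x.
Proof. destruct P as [[? ?] [? ?]]; destruct d; reflexivity. Qed.

Lemma coordp_move_other d e P x : d <> e -> coordp e (move d P x) = coordp e P.
Proof. intros H; destruct P as [[? ?] [? ?]]; destruct d, e; unfold coordp; simpl; congruence. Qed.

Lemma move_move d P x y : move d (move d P x) y = move d P y.
Proof. destruct P as [[? ?] [? ?]]; destruct d; reflexivity. Qed.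

Lemma move_comm d e P x y : d <> e -> move d (move e P y) x = move e (move d P x) y.
Proof. intros H; destruct P as [[? ?] [? ?]]; destruct d, e; try reflexivity; congruence. Qed.

Lemma move_coordp d P : move d P (coordp d P) = P.
Proof. destruct P as [[? ?] [? ?]]; destruct d; reflexivity. Qed.

Section PlaneSlice.

(** [pr] is [Re] or [Im]: the real two-variable results of Coquelicot are applied to each
    component of [G] restricted to the plane through [P] spanned by [d1] and [d2]. *)
Variable pr : C -> R.
Hypothesis pr_dC : forall h x, pr (dC h x) = Derive (fun t => pr (h t)) x.
Hypothesis pr_ex_dC : forall h x, ex_dC h x -> ex_derive (fun t => pr (h t)) x.
Hypothesis pr_le_Cmod : forall z, Rabs (pr z) <= Cmod z.
Hypothesis pr_minus : forall z w, pr (z - w)%C = pr z - pr w.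

Variables (d1 d2 : dir) (P : C * C).
Hypothesis d1_neq_d2 : d1 <> d2.
Hypothesis P_inH2 : inH2 (fst P) (snd P).

Definition plane (u v : R) : C * C := move d2 (move d1 P u) v.

Definition slice (G : C -> C -> C) (u v : R) : R :=
  pr (G (fst (plane u v)) (snd (plane u v))).

Lemma line_plane_1 G u v :
  line d1 G (fst (plane u v)) (snd (plane u v)) = fun z => G (fst (plane z v)) (snd (plane z v)).
Proof.
  rewrite line_move; apply functional_extensionality; intro z; unfold plane.
  now rewrite move_comm, move_move.
Qed.

Lemma line_plane_2 G u v :
  line d2 G (fst (plane u v)) (snd (plane u v)) = fun z => G (fst (plane u z)) (snd (plane u z)).
Proof.
  rewrite line_move; apply functional_extensionality; intro z; unfold plane.
  now rewrite move_move.
Qed.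

Lemma coord_plane_1 u v : coord d1 (fst (plane u v)) (snd (plane u v)) = u.
Proof.
  change (coordp d1 (plane u v) = u); unfold plane.
  rewrite coordp_move_other by auto; apply coordp_move.
Qed.

Lemma coord_plane_2 u v : coord d2 (fst (plane u v)) (snd (plane u v)) = v.
Proof. apply coordp_move. Qed.

Lemma Derive_slice_1 G u v : Derive (fun z => slice G z v) u = slice (pd d1 G) u v.
Proof. unfold slice at 2, pd; now rewrite line_plane_1, coord_plane_1, pr_dC. Qed.

Lemma Derive_slice_2 G u v : Derive (fun z => slice G u z) v = slice (pd d2 G) u v.
Proof. unfold slice at 2, pd; now rewrite line_plane_2, coord_plane_2, pr_dC. Qed.

Lemma ex_derive_slice_1 G u v :
  ex_pd d1 G (fst (plane u v)) (snd (plane u v)) -> ex_derive (fun z => slice G z v) u.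
Proof. unfold ex_pd; rewrite line_plane_1, coord_plane_1; apply pr_ex_dC. Qed.

Lemma ex_derive_slice_2 G u v :
  ex_pd d2 G (fst (plane u v)) (snd (plane u v)) -> ex_derive (fun z => slice G u z) v.
Proof. unfold ex_pd; rewrite line_plane_2, coord_plane_2; apply pr_ex_dC. Qed.

Lemma continuity_2d_pt_slice G u v :
  continuous_coords G (fst (plane u v)) (snd (plane u v)) -> continuity_2d_pt (slice G) u v.
Proof.
  intros H eps; destruct (H eps) as [delta Hd]; exists delta; intros u' v' hu hv.
  unfold slice; rewrite <- pr_minus; eapply Rle_lt_trans; [apply pr_le_Cmod |].
  apply Hd; unfold plane, move; destruct P as [[? ?] [? ?]]; destruct d1, d2; simpl;
    try (rewrite Rminus_diag, Rabs_R0; apply cond_pos); assumption.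
Qed.

Lemma plane_coordp : plane (coordp d1 P) (coordp d2 P) = P.
Proof. unfold plane; now rewrite !move_coordp. Qed.

Lemma locally_2d_plane_inH2 :
  locally_2d (fun u v => inH2 (fst (plane u v)) (snd (plane u v))) (coordp d1 P) (coordp d2 P).
Proof.
  destruct P_inH2 as [Ha Hb]; unfold inH in *.
  exists (mkposreal _ (Rmin_pos _ _ Ha Hb)); simpl; intros u v hu hv.
  pose proof (Rmin_l (Im (fst P)) (Im (snd P))); pose proof (Rmin_r (Im (fst P)) (Im (snd P))).
  apply Rabs_def2 in hu; apply Rabs_def2 in hv.
  unfold plane, move, coordp in *; destruct d1, d2; simpl in *; split; unfold inH; simpl; lra.
Qed.

Lemma slice_schwarz G : smooth G ->
  slice (pd d1 (pd d2 G)) (coordp d1 P) (coordp d2 P) =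
  slice (pd d2 (pd d1 G)) (coordp d1 P) (coordp d2 P).
Proof.
  intros HG; rewrite <- Derive_slice_1, <- Derive_slice_2.
  rewrite (Derive_ext (fun z => slice (pd d2 G) z (coordp d2 P))
             (fun z => Derive (fun t => slice G z t) (coordp d2 P)))
    by (intros; symmetry; apply Derive_slice_2).
  rewrite (Derive_ext (fun z => slice (pd d1 G) (coordp d1 P) z)
             (fun z => Derive (fun t => slice G t z) (coordp d1 P)))
    by (intros; symmetry; apply Derive_slice_1).
  apply Schwarz.
  - eapply locally_2d_impl; [| apply locally_2d_plane_inH2].
    apply locally_2d_forall; intros u v Huv; repeat split.
    + apply ex_derive_slice_1, smooth_ex_pd; auto.
    + apply ex_derive_slice_2, smooth_ex_pd; auto.
    + eapply ex_derive_ext; [intros; symmetry; apply Derive_slice_2 |].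
      apply ex_derive_slice_1, smooth_ex_pd; auto; apply smooth_pd; auto.
    + eapply ex_derive_ext; [intros; symmetry; apply Derive_slice_1 |].
      apply ex_derive_slice_2, smooth_ex_pd; auto; apply smooth_pd; auto.
  - apply (continuity_2d_pt_ext (slice (pd d1 (pd d2 G)))).
    + intros u v; rewrite <- Derive_slice_1.
      apply Derive_ext; intros; symmetry; apply Derive_slice_2.
    + apply continuity_2d_pt_slice; rewrite plane_coordp.
      apply smooth_continuous_coords; auto; do 2 apply smooth_pd; auto.
  - apply (continuity_2d_pt_ext (slice (pd d2 (pd d1 G)))).
    + intros u v; rewrite <- Derive_slice_2.
      apply Derive_ext; intros; symmetry; apply Derive_slice_1.
    + apply continuity_2d_pt_slice; rewrite plane_coordp.
      apply smooth_continuous_coords; auto; do 2 apply smooth_pd; auto.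
Qed.

Lemma slice_diagonal G : smooth G -> coordp d1 P = coordp d2 P ->
  is_derive (fun x => slice G x x) (coordp d1 P)
    (slice (pd d1 G) (coordp d1 P) (coordp d2 P) + slice (pd d2 G) (coordp d1 P) (coordp d2 P)).
Proof.
  intros HG Hc.
  assert (Hd : differentiable_pt_lim (slice G) (coordp d1 P) (coordp d2 P)
                 (slice (pd d1 G) (coordp d1 P) (coordp d2 P))
                 (slice (pd d2 G) (coordp d1 P) (coordp d2 P))).
  { apply filterdiff_differentiable_pt_lim.
    apply (is_derive_filterdiff (slice G) _ _ (slice (pd d1 G))).
    - apply (locally_2d_locally
               (fun u v => is_derive (fun z => slice G z v) u (slice (pd d1 G) u v))).
      eapply locally_2d_impl; [| apply locally_2d_plane_inH2].
      apply locally_2d_forall; intros u v Huv; rewrite <- Derive_slice_1.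
      apply Derive_correct, ex_derive_slice_1, smooth_ex_pd; auto.
    - rewrite <- Derive_slice_2; apply Derive_correct, ex_derive_slice_2, smooth_ex_pd; auto.
      rewrite plane_coordp; exact P_inH2.
    - apply (proj1 (continuity_2d_pt_filterlim _ _ _)), continuity_2d_pt_slice.
      rewrite plane_coordp; apply smooth_continuous_coords; auto; apply smooth_pd; auto. }
  rewrite <- Hc in Hd |- *; apply is_derive_Reals.
  pose proof (derivable_pt_lim_comp_2d _ _ _ _ _ _ _ _ Hd (derivable_pt_lim_id _)
                (derivable_pt_lim_id _)) as H.
  now rewrite !Rmult_1_r in H.
Qed.

End PlaneSlice.

Lemma Im_le_Cmod z : Rabs (Im z) <= Cmod z.
Proof.
  pose proof (Rmax_Cmod z); pose proof (Rmax_r (Rabs (fst z)) (Rabs (snd z))); unfold Im; lra.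
Qed.

Lemma Re_minus z w : Re (z - w)%C = Re z - Re w.
Proof. destruct z, w; simpl; ring. Qed.

Lemma Im_minus z w : Im (z - w)%C = Im z - Im w.
Proof. destruct z, w; simpl; ring. Qed.

Lemma dir_eq_dec (d1 d2 : dir) : {d1 = d2} + {d1 <> d2}.
Proof. decide equality. Qed.

Lemma pd_comm d1 d2 G a b : smooth G -> inH2 a b -> pd d1 (pd d2 G) a b = pd d2 (pd d1 G) a b.
Proof.
  intros HG Hab; destruct (dir_eq_dec d1 d2) as [<- | Hd]; [reflexivity |].
  pose proof (slice_schwarz Re (fun _ _ => eq_refl) (fun _ _ H => proj1 H) re_le_Cmod Re_minus
                d1 d2 (a, b) Hd Hab G HG) as HRe.
  pose proof (slice_schwarz Im (fun _ _ => eq_refl) (fun _ _ H => proj2 H) Im_le_Cmod Im_minus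
                d1 d2 (a, b) Hd Hab G HG) as HIm.
  unfold slice in HRe, HIm; rewrite plane_coordp in HRe, HIm.
  now apply injective_projections.
Qed.

Lemma dC_diagonal d1 d2 G t : smooth G -> inH t -> d1 <> d2 ->
  coordp d1 (t, t) = coordp d2 (t, t) ->
  dC (fun x => G (fst (plane d1 d2 (t, t) x x)) (snd (plane d1 d2 (t, t) x x))) (coordp d1 (t, t))
  = (pd d1 G t t + pd d2 G t t)%C.
Proof.
  intros HG Ht Hd Hc; assert (Htt : inH2 t t) by now split.
  pose proof (slice_diagonal Re (fun _ _ => eq_refl) (fun _ _ H => proj1 H) re_le_Cmod Re_minus
                d1 d2 (t, t) Hd Htt G HG Hc) as HRe.
  pose proof (slice_diagonal Im (fun _ _ => eq_refl) (fun _ _ H => proj2 H) Im_le_Cmod Im_minus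
                d1 d2 (t, t) Hd Htt G HG Hc) as HIm.
  unfold slice at 2 3 in HRe; unfold slice at 2 3 in HIm; rewrite plane_coordp in HRe, HIm.
  apply is_dC_unique; split; assumption.
Qed.

Lemma Lop_diagonal G t : smooth G -> inH t -> Lop (fun t => G t t) t = (L1 G t t + L2 G t t)%C.
Proof.
  intros HG Ht.
  assert (Hu : du (fun t => G t t) t = (pd U1 G t t + pd U2 G t t)%C)
    by (destruct t; apply (dC_diagonal U1 U2); auto; discriminate).
  assert (Hv : dv (fun t => G t t) t = (pd V1 G t t + pd V2 G t t)%C)
    by (destruct t; apply (dC_diagonal V1 V2); auto; discriminate).
  unfold Lop, dtaubar, L1, L2, dtaubar1, dtaubar2; rewrite Hu, Hv; ring.
Qed.

Definition pd_comb (c1 : C) (d1 : dir) (c2 : C) (d2 : dir) (f : C -> C -> C) : C -> C -> C :=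
  fun a b => (c1 * pd d1 f a b + c2 * pd d2 f a b)%C.

Lemma dtau1_pd_comb : dtau1 = pd_comb (RtoC (/ 2)) U1 (- (RtoC (/ 2) * Ci))%C V1.
Proof.
  do 3 (apply functional_extensionality; intro); unfold dtau1, pd_comb; ring.
Qed.

Lemma dtaubar1_pd_comb : dtaubar1 = pd_comb (RtoC (/ 2)) U1 (RtoC (/ 2) * Ci)%C V1.
Proof.
  do 3 (apply functional_extensionality; intro); unfold dtaubar1, pd_comb; ring.
Qed.

Lemma dtau2_pd_comb : dtau2 = pd_comb (RtoC (/ 2)) U2 (- (RtoC (/ 2) * Ci))%C V2.
Proof.
  do 3 (apply functional_extensionality; intro); unfold dtau2, pd_comb; ring.
Qed.

Lemma dtaubar2_pd_comb : dtaubar2 = pd_comb (RtoC (/ 2)) U2 (RtoC (/ 2) * Ci)%C V2.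
Proof.
  do 3 (apply functional_extensionality; intro); unfold dtaubar2, pd_comb; ring.
Qed.

Lemma dtau1n_iter m f : dtau1n m f = Nat.iter m dtau1 f.
Proof. induction m; simpl; congruence. Qed.

Lemma dtau2n_iter m f : dtau2n m f = Nat.iter m dtau2 f.
Proof. induction m; simpl; congruence. Qed.

Lemma pd_pd_comb d c1 d1 c2 d2 f a b : smooth f -> inH2 a b ->
  pd d (pd_comb c1 d1 c2 d2 f) a b = (c1 * pd d (pd d1 f) a b + c2 * pd d (pd d2 f) a b)%C.
Proof.
  intros Hf Hab; unfold pd_comb.
  assert (E1 : ex_pd d (pd d1 f) a b) by (apply smooth_ex_pd, Hab; now apply smooth_pd).
  assert (E2 : ex_pd d (pd d2 f) a b) by (apply smooth_ex_pd, Hab; now apply smooth_pd).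
  now rewrite pd_plus, !pd_scal by auto using ex_pd_scal.
Qed.

Definition admissible (X : (C -> C -> C) -> C -> C -> C) : Prop :=
  (forall f g, eqH2 f g -> eqH2 (X f) (X g)) /\ (forall f, smooth f -> smooth (X f)).

Definition commute (X Y : (C -> C -> C) -> C -> C -> C) : Prop :=
  forall f, smooth f -> eqH2 (X (Y f)) (Y (X f)).

Lemma admissible_pd_comb c1 d1 c2 d2 : admissible (pd_comb c1 d1 c2 d2).
Proof.
  split.
  - intros f g E a b Hab; unfold pd_comb; now rewrite (pd_eqH2 d1 f g E), (pd_eqH2 d2 f g E).
  - intros f Hf; apply smooth_lin; [| apply smooth_scal]; now apply smooth_pd.
Qed.

Lemma admissible_dtau1 : admissible dtau1.
Proof. rewrite dtau1_pd_comb; apply admissible_pd_comb. Qed.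

Lemma admissible_dtau2 : admissible dtau2.
Proof. rewrite dtau2_pd_comb; apply admissible_pd_comb. Qed.

Lemma admissible_dtaubar1 : admissible dtaubar1.
Proof. rewrite dtaubar1_pd_comb; apply admissible_pd_comb. Qed.

Lemma admissible_dtaubar2 : admissible dtaubar2.
Proof. rewrite dtaubar2_pd_comb; apply admissible_pd_comb. Qed.

Lemma admissible_iter X n : admissible X -> admissible (Nat.iter n X).
Proof. intros [H1 H2]; induction n as [|n [IH1 IH2]]; split; simpl; auto. Qed.

Lemma commute_pd_comb c1 d1 c2 d2 e1 d3 e2 d4 : commute (pd_comb c1 d1 c2 d2) (pd_comb e1 d3 e2 d4).
Proof.
  intros f Hf a b Hab; unfold pd_comb at 1 3; rewrite !pd_pd_comb by auto.
  rewrite (pd_comm d1 d3), (pd_comm d1 d4), (pd_comm d2 d3), (pd_comm d2 d4) by auto; ring.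
Qed.

Lemma commute_iter_r X Y n : admissible X -> admissible Y -> commute X Y ->
  commute X (Nat.iter n Y).
Proof.
  intros HX HY HC; induction n as [|n IH]; intros f Hf; simpl; [apply eqH2_refl |].
  eapply eqH2_trans; [apply HC, (admissible_iter Y n HY), Hf |].
  apply (proj1 HY), IH, Hf.
Qed.

Lemma commute_iter X Y m n : admissible X -> admissible Y -> commute X Y ->
  commute (Nat.iter m X) (Nat.iter n Y).
Proof.
  intros HX HY HC; induction m as [|m IH]; intros f Hf; simpl; [apply eqH2_refl |].
  eapply eqH2_trans; [apply (proj1 HX), IH, Hf |].
  apply commute_iter_r; auto; apply (admissible_iter X m HX), Hf.
Qed.

Lemma smooth_dtau1n m f : smooth f -> smooth (dtau1n m f).
Proof. rewrite dtau1n_iter; apply (admissible_iter _ m admissible_dtau1). Qed.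

Lemma smooth_dtau2n m f : smooth f -> smooth (dtau2n m f).
Proof. rewrite dtau2n_iter; apply (admissible_iter _ m admissible_dtau2). Qed.

Lemma dtau1n_eqH2 m f g : eqH2 f g -> eqH2 (dtau1n m f) (dtau1n m g).
Proof. rewrite !dtau1n_iter; apply (admissible_iter _ m admissible_dtau1). Qed.

Lemma dtau2n_dtau1n m n f : smooth f -> eqH2 (dtau2n m (dtau1n n f)) (dtau1n n (dtau2n m f)).
Proof.
  rewrite !dtau1n_iter, !dtau2n_iter.
  apply commute_iter; auto using admissible_dtau1, admissible_dtau2.
  rewrite dtau1_pd_comb, dtau2_pd_comb; apply commute_pd_comb.
Qed.

Lemma dtaubar2_dtau1n_dtau2n m n f : smooth f ->
  eqH2 (dtaubar2 (dtau1n m (dtau2n n f))) (dtau1n m (dtau2n n (dtaubar2 f))).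
Proof.
  intros Hf; rewrite !dtau1n_iter, !dtau2n_iter.
  eapply eqH2_trans; [apply (commute_iter dtaubar2 dtau1 1 m) |].
  - exact admissible_dtaubar2.
  - exact admissible_dtau1.
  - rewrite dtaubar2_pd_comb, dtau1_pd_comb; apply commute_pd_comb.
  - apply (admissible_iter _ n admissible_dtau2), Hf.
  - apply (admissible_iter _ m admissible_dtau1), (commute_iter dtaubar2 dtau2 1 n), Hf.
    + exact admissible_dtaubar2.
    + exact admissible_dtau2.
    + rewrite dtaubar2_pd_comb, dtau2_pd_comb; apply commute_pd_comb.
Qed.

Lemma pd_comb_sum_n c1 d1 c2 d2 (w : nat -> C) F n a b :
  (forall r, (r <= n)%nat -> ex_pd d1 (F r) a b /\ ex_pd d2 (F r) a b) ->
  pd_comb c1 d1 c2 d2 (fun a b => sum_n (fun r => w r * F r a b)%C n) a b =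
  sum_n (fun r => w r * pd_comb c1 d1 c2 d2 (F r) a b)%C n.
Proof.
  intros H; unfold pd_comb; rewrite !pd_sum_n by (intros; apply ex_pd_scal, H; auto).
  rewrite <- !sum_n_Cmult_l, <- sum_n_Cplus; apply sum_n_Cext; intros r Hr.
  destruct (H r Hr); rewrite !pd_scal by auto; ring.
Qed.

Lemma pd_comb_mul_const_along c1 d1 c2 d2 c h a b :
  (forall x, line d1 c a b x = c a b) -> (forall x, line d2 c a b x = c a b) ->
  ex_pd d1 h a b -> ex_pd d2 h a b ->
  pd_comb c1 d1 c2 d2 (fun a b => c a b * h a b)%C a b = (c a b * pd_comb c1 d1 c2 d2 h a b)%C.
Proof. intros; unfold pd_comb; rewrite !pd_mul_const_along by auto; ring. Qed.

Lemma dtau1n_mul_snd n (c : C -> C) h : smooth h ->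
  eqH2 (dtau1n n (fun a b => c b * h a b)%C) (fun a b => c b * dtau1n n h a b)%C.
Proof.
  intros Hh; induction n as [|n IH]; simpl; [apply eqH2_refl |].
  eapply eqH2_trans; [apply (proj1 admissible_dtau1), IH |].
  intros a b Hab; rewrite dtau1_pd_comb.
  apply pd_comb_mul_const_along; try reflexivity; apply smooth_ex_pd, Hab; now apply smooth_dtau1n.
Qed.

(** * Harmonic functions *)

Definition inv_v1_pow (m : nat) : C -> C -> C := fun a _ => RtoC ((/ Im a) ^ m).

Lemma is_derive_inv_pow (x : R) (m : nat) : x <> 0 ->
  is_derive (fun y => (/ y) ^ m) x (- INR m * (/ x) ^ S m).
Proof.
  intros Hx; auto_derive; [exact Hx |].
  destruct m as [|m]; [simpl; ring |].
  simpl pred; rewrite S_INR; simpl; field; exact Hx.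
Qed.

Lemma is_pd_V1_inv_v1_pow m a b : inH a ->
  is_pd V1 (inv_v1_pow m) a b (RtoC (- INR m / Im a) * inv_v1_pow m a b)%C.
Proof.
  intros Ha; unfold inH in Ha; unfold inv_v1_pow; rewrite <- RtoC_mult.
  replace (- INR m / Im a * (/ Im a) ^ m) with (- INR m * (/ Im a) ^ S m) by (simpl; field; lra).
  apply (is_dC_RtoC (fun y => (/ y) ^ m)), is_derive_inv_pow; simpl; lra.
Qed.

Lemma ex_pd_inv_v1_pow_mul d m h a b : (d = U1 \/ d = V1) -> inH a -> ex_pd d h a b ->
  ex_pd d (fun a b => inv_v1_pow m a b * h a b)%C a b.
Proof.
  intros [-> | ->] Ha H; apply ex_pd_mult; auto.
  - eapply is_pd_ex_pd, is_pd_const_along; reflexivity.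
  - eapply is_pd_ex_pd, is_pd_V1_inv_v1_pow, Ha.
Qed.

Lemma RtoC_2_half : (RtoC 2 * RtoC (/ 2) = 1)%C.
Proof. rewrite <- RtoC_mult; f_equal; field. Qed.

Lemma dtau1_inv_v1_pow_mul m h a b : inH a -> ex_pd U1 h a b -> ex_pd V1 h a b ->
  dtau1 (fun a b => inv_v1_pow m a b * h a b)%C a b =
  (inv_v1_pow m a b * dtau1 h a b + Ci * RtoC (INR m / (2 * Im a)) * inv_v1_pow m a b * h a b)%C.
Proof.
  intros Ha H1 H2; unfold dtau1.
  rewrite !pd_mult by eauto using is_pd_ex_pd, is_pd_V1_inv_v1_pow, is_pd_const_along.
  rewrite (is_pd_unique _ _ _ _ _ (is_pd_V1_inv_v1_pow m a b Ha)).
  rewrite (is_pd_unique _ _ _ _ _ (is_pd_const_along U1 (inv_v1_pow m) a b (fun _ => eq_refl))).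
  replace (RtoC (- INR m / Im a)) with (- RtoC 2 * RtoC (INR m / (2 * Im a)))%C;
    [ring [RtoC_2_half] |].
  unfold inH in Ha; rewrite <- RtoC_opp, <- RtoC_mult; f_equal; field; lra.
Qed.

Lemma Ci_sqr : (Ci * Ci = - 1)%C.
Proof. apply injective_projections; simpl; ring. Qed.

Lemma RtoC_neq_0 x : x <> 0 -> RtoC x <> 0%C.
Proof. intros H E; apply H; now injection E. Qed.

Lemma Ceq_of_sub_eq_mul_zero (E K L R : C) : E = 0%C -> (L - R = K * E)%C -> L = R.
Proof. intros H1 H2; rewrite H1, Cmult_0_r in H2; now apply Ceq_minus. Qed.

Lemma dtau1_dtaubar1_harmonic k g : smooth g -> eqH2 (Delta1 k g) (fun _ _ => 0%C) ->
  eqH2 (dtau1 (dtaubar1 g)) (fun a b => Ci * RtoC (IZR k / (2 * Im a)) * dtaubar1 g a b)%C.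
Proof.
  intros Hg HD a b Hab; pose proof (HD a b Hab) as H; unfold Delta1 in H.
  rewrite dtau1_pd_comb, dtaubar1_pd_comb; unfold pd_comb at 1; rewrite !pd_pd_comb by auto.
  rewrite (pd_comm V1 U1) by auto; unfold pd_comb.
  assert (Hv : Im a <> 0) by (destruct Hab as [Ha _]; unfold inH in Ha; lra).
  rewrite RtoC_opp, RtoC_pow, RtoC_mult in H.
  rewrite RtoC_div, RtoC_mult, !RtoC_inv by lra.
  apply (Ceq_of_sub_eq_mul_zero _ (- / (RtoC 4 * RtoC (Im a) * RtoC (Im a))) _ _ H).
  field [Ci_sqr]; repeat split; try apply RtoC_neq_0; auto; lra.
Qed.

Fixpoint rising (x : R) (m : nat) : R :=
  match m with O => 1 | S m' => rising x m' * (x + INR m') end.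

Lemma dtau1_scal (c : C) h a b : ex_pd U1 h a b -> ex_pd V1 h a b ->
  dtau1 (fun a b => c * h a b)%C a b = (c * dtau1 h a b)%C.
Proof. intros; unfold dtau1; rewrite !pd_scal by auto; ring. Qed.

Lemma dtau1n_dtaubar1_harmonic k g m : smooth g -> eqH2 (Delta1 k g) (fun _ _ => 0%C) ->
  eqH2 (dtau1n m (dtaubar1 g))
    (fun a b => inv_v1_pow m a b *
                ((Ci * RtoC (/ 2)) ^ m * RtoC (rising (IZR k) m) * dtaubar1 g a b))%C.
Proof.
  intros Hg HD; induction m as [|m IH]; [intros a b _; unfold inv_v1_pow; simpl; ring |].
  simpl; eapply eqH2_trans; [apply (proj1 admissible_dtau1), IH |]; intros a b Hab.
  assert (Sg : smooth (dtaubar1 g)) by now apply admissible_dtaubar1.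
  pose proof Hab as [Ha _]; assert (Hv : Im a <> 0) by (unfold inH in Ha; lra).
  rewrite dtau1_inv_v1_pow_mul, dtau1_scal by auto using ex_pd_scal, smooth_ex_pd.
  rewrite (dtau1_dtaubar1_harmonic k g Hg HD a b Hab).
  assert (E : (RtoC (IZR k / (2 * Im a)) + RtoC (INR m / (2 * Im a)) =
               RtoC (/ Im a) * RtoC (/ 2) * RtoC (IZR k + INR m))%C)
    by (rewrite <- RtoC_plus, <- !RtoC_mult; f_equal; field; lra).
  replace (inv_v1_pow (S m) a b) with (RtoC (/ Im a) * inv_v1_pow m a b)%C
    by (unfold inv_v1_pow; now rewrite <- RtoC_mult).
  rewrite (RtoC_mult (rising _ m)); simpl Cpow.
  transitivity (inv_v1_pow m a b * ((Ci * RtoC (/ 2)) ^ m * RtoC (rising (IZR k) m) *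
    (Ci * (RtoC (IZR k / (2 * Im a)) + RtoC (INR m / (2 * Im a))) * dtaubar1 g a b)))%C;
    [ring | rewrite E; ring].
Qed.

Definition swap (f : C -> C -> C) : C -> C -> C := fun a b => f b a.

Definition swap_dir (d : dir) : dir :=
  match d with U1 => U2 | V1 => V2 | U2 => U1 | V2 => V1 end.

Lemma iterD_swap ds f : iterD ds (swap f) = swap (iterD (map swap_dir ds) f).
Proof. induction ds as [|d ds IH]; simpl; [reflexivity | rewrite IH; now destruct d]. Qed.

Lemma inH2_swap a b : inH2 a b -> inH2 b a.
Proof. intros [H1 H2]; now split. Qed.

Lemma smooth_swap f : smooth f -> smooth (swap f).
Proof.
  intros H ds a b Hab; rewrite iterD_swap.
  destruct (H (map swap_dir ds) b a (inH2_swap _ _ Hab)) as [Hc He]; split.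
  - intros eps; destruct (Hc eps) as [delta Hd]; exists delta; intros; now apply Hd.
  - intros d; generalize (He (swap_dir d)); now destruct d.
Qed.

Lemma eqH2_swap f g : eqH2 f g -> eqH2 (swap f) (swap g).
Proof. intros H a b Hab; apply H, inH2_swap, Hab. Qed.

Lemma dtau1n_swap n f : dtau1n n (swap f) = swap (dtau2n n f).
Proof. induction n as [|n IH]; simpl; [reflexivity | now rewrite IH]. Qed.

Lemma dtau2n_swap n f : dtau2n n (swap f) = swap (dtau1n n f).
Proof. induction n as [|n IH]; simpl; [reflexivity | now rewrite IH]. Qed.

Lemma Rit1_swap k j f : Rit1 k j (swap f) = swap (Rit2 k j f).
Proof. induction j as [|j IH]; simpl; [reflexivity | now rewrite IH]. Qed.

Lemma dtau2n_dtaubar2_harmonic k g m : smooth g -> eqH2 (Delta2 k g) (fun _ _ => 0%C) ->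
  eqH2 (dtau2n m (dtaubar2 g))
    (fun a b => RtoC ((/ Im b) ^ m) *
                ((Ci * RtoC (/ 2)) ^ m * RtoC (rising (IZR k) m) * dtaubar2 g a b))%C.
Proof.
  intros Hg HD.
  pose proof (eqH2_swap _ _ (dtau1n_dtaubar1_harmonic k (swap g) m (smooth_swap g Hg)
                                (eqH2_swap _ _ HD))) as H.
  change (dtaubar1 (swap g)) with (swap (dtaubar2 g)) in H.
  now rewrite dtau1n_swap in H.
Qed.

(** * The iterated raising operator *)

(** The recursion is the one produced by one more raising operator; the closed form is
    [raise_coef_closed]. *)
Fixpoint raise_coef (k : R) (j r : nat) : R :=
  match j with
  | O => match r with O => 1 | S _ => 0 end
  | S j' => raise_coef k j' r * (k + INR j' + INR r) +
            match r with O => 0 | S r' => raise_coef k j' r' end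
  end.

Lemma raise_coef_gt k j r : (j < r)%nat -> raise_coef k j r = 0.
Proof.
  revert r; induction j as [|j IH]; intros r H; simpl; [destruct r; [lia | reflexivity] |].
  destruct r as [|r]; [lia |]; rewrite !IH by lia; ring.
Qed.

Definition raise_expansion (k : R) (j : nat) (f : C -> C -> C) : C -> C -> C :=
  fun a b => sum_n (fun r => (RtoC 2 * Ci) ^ r * RtoC (raise_coef k j r) *
                             (inv_v1_pow (j - r) a b * dtau1n r f a b))%C j.

(** Weaker than smoothness, so that it also covers [L2 f] without closing [smooth] under
    multiplication by functions of [Im b]. *)
Definition dtau1n_regular (f : C -> C -> C) : Prop :=
  forall r a b, inH2 a b -> ex_pd U1 (dtau1n r f) a b /\ ex_pd V1 (dtau1n r f) a b.

Lemma R1_eqH2 k f g : eqH2 f g -> eqH2 (Defs.R1 k f) (Defs.R1 k g).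
Proof.
  intros E a b Hab; unfold Defs.R1.
  now rewrite ((proj1 admissible_dtau1) f g E a b Hab), E.
Qed.

Lemma R1_sum_n k (w : nat -> C) F n a b :
  (forall r, (r <= n)%nat -> ex_pd U1 (F r) a b /\ ex_pd V1 (F r) a b) ->
  Defs.R1 k (fun a b => sum_n (fun r => w r * F r a b)%C n) a b =
  sum_n (fun r => w r * Defs.R1 k (F r) a b)%C n.
Proof.
  intros H; unfold Defs.R1; rewrite dtau1_pd_comb, pd_comb_sum_n by exact H.
  rewrite <- !sum_n_Cmult_l, <- sum_n_Cplus; apply sum_n_Cext; intros; ring.
Qed.

Lemma R1_inv_v1_pow_mul k m h a b : inH a -> ex_pd U1 h a b -> ex_pd V1 h a b ->
  Defs.R1 k (fun a b => inv_v1_pow m a b * h a b)%C a b =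
  (RtoC 2 * Ci * (inv_v1_pow m a b * dtau1 h a b) +
   RtoC (IZR k - INR m) * (inv_v1_pow (S m) a b * h a b))%C.
Proof.
  intros Ha H1 H2; unfold Defs.R1; rewrite dtau1_inv_v1_pow_mul by auto.
  replace (inv_v1_pow (S m) a b) with (RtoC (/ Im a) * inv_v1_pow m a b)%C
    by (unfold inv_v1_pow; now rewrite <- RtoC_mult).
  unfold inH in Ha; rewrite !RtoC_div, RtoC_minus, RtoC_mult, RtoC_inv by lra.
  field [Ci_sqr]; apply RtoC_neq_0; lra.
Qed.

Lemma sum_n_shift_plus (F G : nat -> C) n : F 0%nat = 0%C -> G (S n) = 0%C ->
  sum_n (fun r => F (S r) + G r)%C n = sum_n (fun r => F r + G r)%C (S n) :> C.
Proof. intros HF HG; rewrite !sum_n_Cplus, sum_n_Sn_l, (sum_n_CSn G), HF, HG; ring. Qed.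

Lemma Rit1_expansion k j f : dtau1n_regular f -> eqH2 (Rit1 k j f) (raise_expansion (IZR k) j f).
Proof.
  intros Hf; induction j as [|j IH].
  { intros a b _; unfold raise_expansion; rewrite sum_O; unfold inv_v1_pow; simpl; ring. }
  intros a b Hab; pose proof Hab as [Ha _].
  change (Rit1 k (S j) f) with (Defs.R1 (k + 2 * Z.of_nat j) (Rit1 k j f)).
  rewrite (R1_eqH2 _ _ _ IH a b Hab); unfold raise_expansion at 1.
  rewrite R1_sum_n
    by (intros r _; destruct (Hf r a b Hab); split; apply ex_pd_inv_v1_pow_mul; auto).
  set (F r := ((RtoC 2 * Ci) ^ r *
               RtoC (match r with O => 0 | S r' => raise_coef (IZR k) j r' end) *
               (inv_v1_pow (S j - r) a b * dtau1n r f a b))%C).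
  set (G r := ((RtoC 2 * Ci) ^ r * RtoC (raise_coef (IZR k) j r * (IZR k + INR j + INR r)) *
               (inv_v1_pow (S j - r) a b * dtau1n r f a b))%C).
  rewrite (sum_n_Cext _ (fun r => F (S r) + G r)%C).
  - rewrite sum_n_shift_plus.
    + unfold raise_expansion; apply sum_n_Cext; intros r _; unfold F, G; simpl raise_coef.
      rewrite RtoC_plus; ring.
    + unfold F; simpl; ring.
    + unfold G; cbv beta; rewrite raise_coef_gt, Rmult_0_l by lia; ring.
  - intros r Hr; destruct (Hf r a b Hab).
    rewrite R1_inv_v1_pow_mul by auto; unfold F, G.
    replace (S j - r)%nat with (S (j - r)) by lia.
    replace (IZR (k + 2 * Z.of_nat j) - INR (j - r)) with (IZR k + INR j + INR r)
      by (rewrite minus_INR, plus_IZR, mult_IZR, <- INR_IZR_INZ by lia; ring).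
    simpl Nat.sub; simpl Cpow; simpl dtau1n; rewrite (RtoC_mult (raise_coef _ j r)); ring.
Qed.

Lemma smooth_dtau1n_regular f : smooth f -> dtau1n_regular f.
Proof. intros Hf r a b Hab; split; apply smooth_ex_pd; auto; now apply smooth_dtau1n. Qed.

Lemma dtau1n_L2 r f : smooth f ->
  eqH2 (dtau1n r (L2 f))
       (fun a b => RtoC (-2) * Ci * RtoC (Im b ^ 2) * dtau1n r (dtaubar2 f) a b)%C.
Proof.
  intros Hf; apply (dtau1n_mul_snd r (fun b => RtoC (-2) * Ci * RtoC (Im b ^ 2))%C).
  now apply admissible_dtaubar2.
Qed.

Lemma dtau1n_regular_L2 f : smooth f -> dtau1n_regular (L2 f).
Proof.
  intros Hf r a b Hab.
  assert (Sf : smooth (dtau1n r (dtaubar2 f))) by now apply smooth_dtau1n, admissible_dtaubar2.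
  split; (eapply ex_pd_eqH2; [apply eqH2_sym, dtau1n_L2, Hf | exact Hab |]);
    apply ex_pd_mul_const_along; try reflexivity; now apply smooth_ex_pd.
Qed.

Lemma dtaubar2_raise_expansion k j f a b : smooth f -> inH2 a b ->
  dtaubar2 (raise_expansion k j f) a b =
  sum_n (fun r => (RtoC 2 * Ci) ^ r * RtoC (raise_coef k j r) *
                  (inv_v1_pow (j - r) a b * dtau1n r (dtaubar2 f) a b))%C j.
Proof.
  intros Hf Hab; unfold raise_expansion.
  assert (Sr : forall r, smooth (dtau1n r f)) by (intros; now apply smooth_dtau1n).
  rewrite dtaubar2_pd_comb, pd_comb_sum_n
    by (intros r _; split; apply ex_pd_mul_const_along; try reflexivity; now apply smooth_ex_pd).
  apply sum_n_Cext; intros r _; rewrite pd_comb_mul_const_along by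
    (try reflexivity; now apply smooth_ex_pd).
  rewrite <- dtaubar2_pd_comb; f_equal; f_equal; exact (dtaubar2_dtau1n_dtau2n r 0 f Hf a b Hab).
Qed.

Lemma L2_Rit1 k j f : smooth f -> eqH2 (L2 (Rit1 k j f)) (Rit1 k j (L2 f)).
Proof.
  intros Hf a b Hab.
  rewrite (Rit1_expansion k j (L2 f) (dtau1n_regular_L2 f Hf) a b Hab).
  unfold L2 at 1.
  rewrite ((proj1 admissible_dtaubar2) _ _
             (Rit1_expansion k j f (smooth_dtau1n_regular f Hf)) a b Hab).
  rewrite dtaubar2_raise_expansion by auto; unfold raise_expansion.
  rewrite <- sum_n_Cmult_l; apply sum_n_Cext; intros r _.
  rewrite (dtau1n_L2 r f Hf a b Hab); ring.
Qed.

(** * Binomial identities *)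

Lemma rising_succ_l y s : rising y (S s) = y * rising (y + 1) s.
Proof.
  induction s as [|s IH]; [simpl; ring |].
  change (rising y (S (S s))) with (rising y (S s) * (y + INR (S s))).
  rewrite IH; change (rising (y + 1) (S s)) with (rising (y + 1) s * (y + 1 + INR s)).
  rewrite S_INR; ring.
Qed.

Lemma falling_add z m n : falling z (m + n) = falling z m * falling (z - INR m) n.
Proof.
  induction n as [|n IH]; [rewrite Nat.add_0_r; simpl; ring |].
  rewrite Nat.add_succ_r; simpl; rewrite IH, plus_INR; ring.
Qed.

Lemma falling_rising y s : falling (y + INR s - 1) s = rising y s.
Proof.
  revert y; induction s as [|s IH]; intros y; [reflexivity |].
  change (falling (y + INR (S s) - 1) (S s))
    with (falling (y + INR (S s) - 1) s * (y + INR (S s) - 1 - INR s)).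
  replace (y + INR (S s) - 1) with (y + 1 + INR s - 1) by (rewrite S_INR; ring).
  rewrite IH, rising_succ_l; ring.
Qed.

Lemma INR_fact_pos n : 0 < INR (fact n).
Proof. apply lt_0_INR, lt_O_fact. Qed.

Lemma raise_coef_closed k j r n : (r + n = j)%nat ->
  raise_coef k j r = INR (fact j) / (INR (fact r) * INR (fact n)) * rising (k + INR r) n.
Proof.
  revert r n; induction j as [|j IH]; intros r n Hrn.
  { assert (r = 0%nat) by lia; assert (n = 0%nat) by lia; subst; simpl; field. }
  pose proof (INR_fact_pos j); pose proof (INR_fact_pos (S j)).
  destruct r as [|r].
  - simpl raise_coef; rewrite (IH 0%nat j) by lia; replace n with (S j) by lia.
    change (rising (k + INR 0) (S j)) with (rising (k + INR 0) j * (k + INR 0 + INR j)).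
    simpl (fact 0); simpl (INR 0); simpl (INR 1); field; lra.
  - destruct n as [|n].
    + replace r with j by lia; simpl raise_coef.
      rewrite (raise_coef_gt k j (S j)), (IH j 0%nat) by lia.
      simpl rising; simpl (fact 0); simpl (INR 1); field; lra.
    + change (raise_coef k (S j) (S r))
        with (raise_coef k j (S r) * (k + INR j + INR (S r)) + raise_coef k j r).
      rewrite (IH (S r) n), (IH r (S n)) by lia.
      assert (Hj : INR j = INR r + INR n + 1)
        by (replace j with (r + S n)%nat by lia; rewrite plus_INR, S_INR; ring).
      rewrite (rising_succ_l (k + INR r) n).
      change (rising (k + INR (S r)) (S n))
        with (rising (k + INR (S r)) n * (k + INR (S r) + INR n)).
      replace (k + INR r + 1) with (k + INR (S r)) by (rewrite S_INR; ring).
      rewrite !fact_simpl, !mult_INR, !S_INR, Hj.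
      pose proof (INR_fact_pos r); pose proof (INR_fact_pos n).
      pose proof (pos_INR r); pose proof (pos_INR n).
      field; repeat split; lra.
Qed.

Lemma gbinom_rising_raise_coef x y s n :
  gbinom (x + INR (s + n) - 1) s * gbinom (y + INR (s + n) - 1) n * rising y s =
  gbinom (y + INR (s + n) - 1) (s + n) * raise_coef x (s + n) n.
Proof.
  rewrite (raise_coef_closed x (s + n) n s) by lia; unfold gbinom.
  replace (x + INR (s + n) - 1) with (x + INR n + INR s - 1) by (rewrite plus_INR; ring).
  rewrite falling_rising, Nat.add_comm, falling_add.
  replace (y + INR (n + s) - 1 - INR n) with (y + INR s - 1) by (rewrite plus_INR; ring).
  rewrite falling_rising.
  pose proof (INR_fact_pos s); pose proof (INR_fact_pos n); pose proof (INR_fact_pos (n + s)).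
  field; lra.
Qed.

(** * The Cohen kernel *)

Definition cohen_coef (k1 k2 : Z) (j s : nat) : R :=
  (-1) ^ s * gbinom (IZR k1 + INR j - 1) s * gbinom (IZR k2 + INR j - 1) (j - s).

Definition cohen_kernel (k1 k2 : Z) (j : nat) (g : C -> C -> C) : C -> C -> C :=
  fun a b => (Cinv (Cpow (RtoC (2 * PI) * Ci) j) *
              sum_n (fun s => RtoC (cohen_coef k1 k2 j s) * dtau1n (j - s) (dtau2n s g) a b) j)%C.

Lemma fold_right_Cplus_seq (F : nat -> C) m n :
  fold_right Cplus 0%C (map F (seq m (S n))) = sum_n (fun r => F (m + r)%nat) n.
Proof.
  revert m; induction n as [|n IH]; intros m; simpl.
  - rewrite sum_O, Nat.add_0_r; ring.
  - change (F m + fold_right Cplus 0 (map F (seq (S m) (S n))) =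
            sum_n (fun r => F (m + r)%nat) (S n))%C.
    rewrite IH, sum_n_Sn_l, Nat.add_0_r; f_equal.
    apply sum_n_Cext; intros; f_equal; lia.
Qed.

Lemma Cohen_diagonal k1 k2 j g : Cohen k1 k2 j g = fun t => cohen_kernel k1 k2 j g t t.
Proof.
  apply functional_extensionality; intro t; unfold Cohen, cohen_kernel.
  now rewrite fold_right_Cplus_seq.
Qed.

Lemma smooth_cohen_kernel k1 k2 j g : smooth g -> smooth (cohen_kernel k1 k2 j g).
Proof.
  intros Hg; apply smooth_scal, smooth_sum_n; intros s _.
  now apply smooth_scal, smooth_dtau1n, smooth_dtau2n.
Qed.

Lemma neg1_pow_sub j s : (s <= j)%nat -> (-1) ^ j * (-1) ^ (j - s) = (-1) ^ s.
Proof.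
  intros H; rewrite <- pow_add.
  replace (j + (j - s))%nat with (s + 2 * (j - s))%nat by lia.
  now rewrite pow_add, pow_1_even, Rmult_1_r.
Qed.

Lemma cohen_kernel_swap k1 k2 j g : smooth g ->
  eqH2 (swap (cohen_kernel k1 k2 j g))
       (fun a b => RtoC ((-1) ^ j) * cohen_kernel k2 k1 j (swap g) a b)%C.
Proof.
  intros Hg a b Hab; unfold swap at 1; unfold cohen_kernel.
  rewrite (sum_n_rev (fun s => RtoC (cohen_coef k2 k1 j s) * _)%C).
  rewrite Cmult_assoc, (Cmult_comm (RtoC ((-1) ^ j))), <- Cmult_assoc.
  rewrite <- (sum_n_Cmult_l (RtoC ((-1) ^ j))); f_equal.
  apply sum_n_Cext; intros s Hs.
  replace (j - (j - s))%nat with s by lia.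
  change (dtau1n (j - s) (dtau2n s g) b a) with (swap (dtau1n (j - s) (dtau2n s g)) a b).
  rewrite <- dtau2n_swap, <- dtau1n_swap.
  rewrite (dtau2n_dtau1n (j - s) s (swap g) (smooth_swap g Hg) a b Hab).
  rewrite Cmult_assoc, <- RtoC_mult; f_equal; f_equal.
  unfold cohen_coef; replace (j - (j - s))%nat with s by lia.
  rewrite <- (neg1_pow_sub j s Hs); ring.
Qed.

Lemma dtaubar2_dtau1n_dtau2n_harmonic k g m s : smooth g -> eqH2 (Delta2 k g) (fun _ _ => 0%C) ->
  eqH2 (dtaubar2 (dtau1n m (dtau2n s g)))
    (fun a b => RtoC ((/ Im b) ^ s) * ((Ci * RtoC (/ 2)) ^ s * RtoC (rising (IZR k) s)) *
                dtau1n m (dtaubar2 g) a b)%C.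
Proof.
  intros Hg HD.
  eapply eqH2_trans; [apply dtaubar2_dtau1n_dtau2n, Hg |].
  eapply eqH2_trans; [apply dtau1n_eqH2 |].
  - eapply eqH2_trans; [apply (dtau2n_dtaubar2_harmonic k); auto |].
    intros a b _; apply Cmult_assoc.
  - apply (dtau1n_mul_snd m (fun b => RtoC ((/ Im b) ^ s) *
                                      ((Ci * RtoC (/ 2)) ^ s * RtoC (rising (IZR k) s)))%C).
    now apply admissible_dtaubar2.
Qed.

Lemma cohen_normalization j :
  (Cpow (RtoC (-4 * PI)) j * Cinv (Cpow (RtoC (2 * PI) * Ci) j) = Cpow (RtoC 2 * Ci) j)%C.
Proof.
  assert (E : RtoC (-4 * PI) = (RtoC 2 * Ci * (RtoC (2 * PI) * Ci))%C)
    by (apply injective_projections; simpl; ring).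
  assert (Hnz : (RtoC (2 * PI) * Ci)%C <> 0%C)
    by (apply Cmult_neq_0; [apply RtoC_neq_0; pose proof PI_RGT_0; lra | apply Ci_nz]).
  rewrite E, Cpow_mult_l; field; now apply Cpow_nz.
Qed.

Lemma cohen_coef_raise_coef k1 k2 j s : (s <= j)%nat ->
  ((RtoC 2 * Ci) ^ j * RtoC (cohen_coef k1 k2 j s) *
   ((Ci * RtoC (/ 2)) ^ s * RtoC (rising (IZR k2) s)))%C =
  (RtoC (gbinom (IZR k2 + INR j - 1) j) *
   ((RtoC 2 * Ci) ^ (j - s) * RtoC (raise_coef (IZR k1) j (j - s))))%C.
Proof.
  intros Hs.
  pose proof (gbinom_rising_raise_coef (IZR k1) (IZR k2) s (j - s)) as E.
  replace (s + (j - s))%nat with j in E by lia.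
  assert (P : ((RtoC 2 * Ci) ^ s * (Ci * RtoC (/ 2)) ^ s * RtoC ((-1) ^ s) = 1)%C).
  { rewrite <- Cpow_mult_l, RtoC_pow, <- Cpow_mult_l, <- (Cpow_1_l s); f_equal.
    apply injective_projections; simpl; field. }
  replace j with (j - s + s)%nat at 1 by lia; rewrite Cpow_add_r; unfold cohen_coef.
  transitivity ((RtoC 2 * Ci) ^ (j - s) *
    ((RtoC 2 * Ci) ^ s * (Ci * RtoC (/ 2)) ^ s * RtoC ((-1) ^ s)) *
    RtoC (gbinom (IZR k1 + INR j - 1) s * gbinom (IZR k2 + INR j - 1) (j - s) *
          rising (IZR k2) s))%C; [rewrite !RtoC_mult; ring |].
  rewrite P, E, RtoC_mult; ring.
Qed.

Lemma dtaubar2_cohen_kernel k1 k2 j g a b : smooth g -> eqH2 (Delta2 k2 g) (fun _ _ => 0%C) ->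
  inH2 a b ->
  dtaubar2 (cohen_kernel k1 k2 j g) a b =
  (Cinv (Cpow (RtoC (2 * PI) * Ci) j) *
   sum_n (fun s => RtoC (cohen_coef k1 k2 j s) *
     (RtoC ((/ Im b) ^ s) * ((Ci * RtoC (/ 2)) ^ s * RtoC (rising (IZR k2) s)) *
      dtau1n (j - s) (dtaubar2 g) a b)) j)%C.
Proof.
  intros Hg HD Hab.
  assert (S : forall s, smooth (dtau1n (j - s) (dtau2n s g)))
    by (intros; now apply smooth_dtau1n, smooth_dtau2n).
  unfold cohen_kernel; rewrite dtaubar2_pd_comb.
  rewrite (pd_comb_mul_const_along _ _ _ _ (fun _ _ => Cinv (Cpow (RtoC (2 * PI) * Ci) j)))
    by (try reflexivity; apply ex_pd_sum_n; intros; apply ex_pd_scal, smooth_ex_pd; auto).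
  rewrite pd_comb_sum_n by (intros; split; apply smooth_ex_pd; auto).
  f_equal; apply sum_n_Cext; intros s _; f_equal.
  rewrite <- dtaubar2_pd_comb; now apply dtaubar2_dtau1n_dtau2n_harmonic.
Qed.

Lemma L2_cohen_kernel k1 k2 j g t : smooth g -> eqH2 (Delta2 k2 g) (fun _ _ => 0%C) -> inH t ->
  (Cpow (RtoC (-4 * PI)) j * L2 (cohen_kernel k1 k2 j g) t t)%C =
  (RtoC (gbinom (IZR k2 + INR j - 1) j) * Rit1 k1 j (L2 g) t t)%C.
Proof.
  intros Hg HD Ht; assert (Htt : inH2 t t) by now split.
  unfold L2 at 1; rewrite dtaubar2_cohen_kernel by auto.
  rewrite (Rit1_expansion k1 j (L2 g) (dtau1n_regular_L2 g Hg) t t Htt); unfold raise_expansion.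
  rewrite (sum_n_rev (fun r => (RtoC 2 * Ci) ^ r * _ * _)%C).
  transitivity (RtoC (-2) * Ci * RtoC (Im t ^ 2) *
    (Cpow (RtoC (-4 * PI)) j * Cinv (Cpow (RtoC (2 * PI) * Ci) j)) *
    sum_n (fun s => RtoC (cohen_coef k1 k2 j s) *
     (RtoC ((/ Im t) ^ s) * ((Ci * RtoC (/ 2)) ^ s * RtoC (rising (IZR k2) s)) *
      dtau1n (j - s) (dtaubar2 g) t t)) j)%C; [ring |].
  rewrite cohen_normalization, <- !sum_n_Cmult_l; apply sum_n_Cext; intros s Hs.
  replace (j - (j - s))%nat with s by lia.
  rewrite (dtau1n_L2 (j - s) g Hg t t Htt).
  transitivity (RtoC (-2) * Ci * RtoC (Im t ^ 2) * RtoC ((/ Im t) ^ s) *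
    dtau1n (j - s) (dtaubar2 g) t t *
    ((RtoC 2 * Ci) ^ j * RtoC (cohen_coef k1 k2 j s) *
     ((Ci * RtoC (/ 2)) ^ s * RtoC (rising (IZR k2) s))))%C; [ring |].
  rewrite cohen_coef_raise_coef by exact Hs; unfold inv_v1_pow; ring.
Qed.

Lemma L1_cohen_kernel k1 k2 j g t : smooth g -> eqH2 (Delta1 k1 g) (fun _ _ => 0%C) -> inH t ->
  (Cpow (RtoC (-4 * PI)) j * L1 (cohen_kernel k1 k2 j g) t t)%C =
  (RtoC ((-1) ^ j * gbinom (IZR k1 + INR j - 1) j) * L1 (Rit2 k2 j g) t t)%C.
Proof.
  intros Hg HD Ht; assert (Htt : inH2 t t) by now split.
  assert (Sg : smooth (swap g)) by now apply smooth_swap.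
  change (L1 (cohen_kernel k1 k2 j g) t t) with (L2 (swap (cohen_kernel k1 k2 j g)) t t).
  change (L1 (Rit2 k2 j g) t t) with (L2 (swap (Rit2 k2 j g)) t t).
  rewrite <- Rit1_swap, (L2_Rit1 k2 j (swap g) Sg t t Htt).
  rewrite (RtoC_mult ((-1) ^ j)), <- Cmult_assoc.
  rewrite <- (L2_cohen_kernel k2 k1 j (swap g) t Sg (eqH2_swap _ _ HD) Ht).
  unfold L2; rewrite ((proj1 admissible_dtaubar2) _ _ (cohen_kernel_swap k1 k2 j g Hg) t t Htt).
  rewrite dtaubar2_pd_comb, (pd_comb_mul_const_along _ _ _ _ (fun _ _ => RtoC ((-1) ^ j)))
    by (try reflexivity; apply smooth_ex_pd, Htt; now apply smooth_cohen_kernel).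
  ring.
Qed.

Theorem proposition5p8 (D k1 k2 : Z) (g : C -> C -> C)
  (HD : (1 < D)%Z) (HDsq : squarefreeZ D)
  (Hg : smooth_HMF D k1 k2 g)
  (H1 : forall a b : C, inH2 a b -> Delta1 k1 g a b = RtoC 0)
  (H2 : forall a b : C, inH2 a b -> Delta2 k2 g a b = RtoC 0) :
  forall (j : nat) (t : C), inH t ->
    (Cpow (RtoC (-4 * PI)) j * Lop (Cohen k1 k2 j g) t)%C =
    (RtoC (gbinom (IZR k2 + INR j - 1) j) * Rit1 k1 j (L2 g) t t
     + RtoC ((-1) ^ j * gbinom (IZR k1 + INR j - 1) j) * L1 (Rit2 k2 j g) t t)%C.
Proof.
  intros j t Ht.
  assert (Sg : smooth g) by exact (smooth_of_smooth_H2 g (proj1 Hg)).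
  rewrite Cohen_diagonal, Lop_diagonal by auto using smooth_cohen_kernel.
  rewrite <- (L1_cohen_kernel k1 k2 j g t Sg H1 Ht), <- (L2_cohen_kernel k1 k2 j g t Sg H2 Ht).
  ring.
Qed.
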